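(* For $n\in\mathbb{N}$, $z(n)=f(n)+n$ if and only if $n=0$ or $n=\lfloor k\varphi^2\rfloor+1$ for some integer $k\ge1$, where $\varphi=(1+\sqrt5)/2$.
   Context: $\mathbb{N}=\{0,1,2,\dots\}$. The sequence $f:\mathbb{N}\to\mathbb{N}$ is defined greedily: $f(0)=0$, and for $n\ge1$, $f(n)$ is the least natural number such that (i) $f(n)\notin\{f(0),f(1),\dots,f(n-1)\}$ and (ii) $\sum_{1\le i\le n} f(i)$ is divisible by $n$. The sequence $z:\mathbb{N}\to\mathbb{N}$ is defined greedily: $z(0)=0$, and for $n\ge1$, $z(n)$ is the least natural number such that (i) $z(n)\notin\{z(0),\dots,z(n-1)\}$ and (ii) $\sum_{2\le i\le n} z(i)$ is divisible by $n+1$ (the empty sum being $0$). *)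

From mathcomp Require Import all_boot.
From Stdlib Require Import Reals.

Set Implicit Arguments.
Unset Strict Implicit.
Unset Printing Implicit Defensive.

(* Least natural number m < bound satisfying P; returns bound if there is none.
   Since iota 0 bound lists 0,1,...,bound-1, the index found is the value. *)
Definition least_below (bound : nat) (P : pred nat) : nat :=
  find P (iota 0 bound).

(* Given s = [:: f 0; ...; f (n-1)], the greedy choice of f n (n >= 1):
   least m not among s with n | f 1 + ... + f (n-1) + m.
   The least such m is < n*n + n + 1: among the n+1 numbers r, r+n, ..., r+n*n
   (r the required residue mod n, r < n) at least one is not in s (size n). *)
Definition next_f (n : nat) (s : seq nat) : nat :=
  least_below (n * n + n + 1)
    (fun m => (m \notin s) && (n %| sumn (behead s) + m)).

Fixpoint fseq (n : nat) : seq nat :=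
  match n with
  | 0 => [:: 0]
  | n'.+1 => let s := fseq n' in rcons s (next_f n'.+1 s)
  end.

Definition f (n : nat) : nat := nth 0 (fseq n) n.

(* Given s = [:: z 0; ...; z (n-1)], the greedy choice of z n (n >= 1):
   least m not among s with (n+1) | z 2 + ... + z n (empty sum 0 when n = 1),
   where z n = m.  The least such m is < (n+1)*(n+1)+1: among the n+1 numbers
   r, r+(n+1), ..., r+n(n+1) (r < n+1) one is not in s. *)
Definition next_z (n : nat) (s : seq nat) : nat :=
  least_below ((n + 1) * (n + 1) + 1)
    (fun m => (m \notin s) &&
              (n.+1 %| (if 2 <= n then sumn (drop 2 s) + m else 0))).

Fixpoint zseq (n : nat) : seq nat :=
  match n with
  | 0 => [:: 0]
  | n'.+1 => let s := zseq n' in rcons s (next_z n'.+1 s)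
  end.

Definition z (n : nat) : nat := nth 0 (zseq n) n.

Definition phi : R := ((1 + sqrt 5) / 2)%R.

From Pilot Require Import Defs.
From mathcomp Require Import all_boot zify.
From Stdlib Require Import Reals ZArith Lra Lia.

(* Both sequences have closed forms in terms of the lower Wythoff sequence
   a(k) = floor(k phi) and its complement b(k) = a(k) + k = floor(k phi^2).
   f swaps a(k) + 1 and b(k) + 1.  z(n) is a(n) + 1 when n = a(k) and
   a(n) - n = a(l) when n = b(l), except at the odd-indexed Fibonacci numbers
   and their predecessors, where Cassini's identity gives
   a(F(2j+1)) = F(2j+2) and a(F(2j+2)) = F(2j+3) - 1.  Each closed form obeys
   the greedy rule: its value is new, has the residue forced by the
   divisibility condition, and exceeds that residue only when the residue is
   already used.  Comparing the two closed forms, z(n) = f(n) + n exactly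
   when n = b(k) + 1. *)

Local Open Scope R_scope.

Lemma phi_sq : phi * phi = phi + 1.
Proof. by rewrite /phi; have := sqrt_sqrt 5; lra. Qed.

Lemma phi_bounds : 1.6 < phi < 1.62.
Proof.
have sq22 := sqrt_square 2.2 ltac:(lra).
have sq224 := sqrt_square 2.24 ltac:(lra).
have lo : 2.2 < sqrt 5 by rewrite -sq22; apply: sqrt_lt_1; lra.
have hi : sqrt 5 < 2.24 by rewrite -sq224; apply: sqrt_lt_1; lra.
rewrite /phi; lra.
Qed.

Lemma golden_factor (x k : R) :
  x * x - x * k - k * k = (x - k * phi) * (x + k * (phi - 1)).
Proof.
transitivity (x * x - x * k - k * k * (phi * phi - phi)); last ring.
rewrite phi_sq; ring.
Qed.

Lemma lt_mulphi_nat {x k : nat} : (x * x < x * k + k * k)%nat -> INR x < INR k * phi.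
Proof.
move=> /ltP/lt_INR; rewrite plus_INR !mult_INR => lt_xk.
case: (Rlt_or_le (INR x) (INR k * phi)) => // ge_xk; exfalso.
have : 0 <= (INR x - INR k * phi) * (INR x + INR k * (phi - 1)).
  by apply: Rmult_le_pos; have := pos_INR x; have := pos_INR k; have := phi_bounds; nra.
by rewrite -golden_factor; lra.
Qed.

Lemma gt_mulphi_nat {x k : nat} : (x * k + k * k < x * x)%nat -> INR k * phi < INR x.
Proof.
move=> /ltP/lt_INR; rewrite plus_INR !mult_INR => lt_kx.
case: (Rlt_or_le (INR k * phi) (INR x)) => // le_xk; exfalso.
have : 0 <= (INR k * phi - INR x) * (INR x + INR k * (phi - 1)).
  by apply: Rmult_le_pos; have := pos_INR x; have := pos_INR k; have := phi_bounds; nra.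
by have := golden_factor (INR x) (INR k); lra.
Qed.

Local Close Scope R_scope.

Lemma golden_diophantine (n k : nat) : n * n = n * k + k * k -> k = 0.
Proof.
(* Infinite descent: (k, n - k) is a smaller solution. *)
elim/ltn_ind: n k => n IH k eq_nk; case: (posnP k) => [// | k_gt0].
have lt_kn : k < n by nia.
have [d def_n] : exists d, n = k + d by exists (n - k); lia.
suff d0 : d = 0 by move: eq_nk; rewrite def_n d0; nia.
by apply: (IH k lt_kn); rewrite def_n in eq_nk; nia.
Qed.

Local Open Scope R_scope.

Lemma mulphi_neq_nat (n k : nat) : (0 < k)%nat -> INR k * phi <> INR n.
Proof.
move=> k_gt0 eq_n.
have : INR (n * n) = INR (n * k + k * k).
  rewrite plus_INR !mult_INR; have := golden_factor (INR n) (INR k).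
  rewrite eq_n; lra.
by move/INR_eq/golden_diophantine; lia.
Qed.

Lemma leq_INR {a b : nat} : (a <= b)%nat -> INR a <= INR b.
Proof. by move/leP/le_INR. Qed.

Lemma ltn_INR {a b : nat} : (a < b)%nat -> INR a + 1 <= INR b.
Proof. by rewrite -S_INR => /leq_INR. Qed.

Lemma INR_ltn {a b : nat} : INR a < INR b -> (a < b)%nat.
Proof. by move/INR_lt/ltP. Qed.

Lemma Int_part_eq (r : R) (n : nat) : INR n <= r < INR n + 1 -> Int_part r = Z.of_nat n.
Proof.
move=> [lo hi]; rewrite /Int_part.
suff -> : up r = (Z.of_nat n + 1)%Z by lia.
by symmetry; apply: tech_up; rewrite plus_IZR -INR_IZR_INZ; lra.
Qed.

(* The lower Wythoff sequence; its complement in the positive integers is the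
   upper Wythoff sequence k |-> wyA k + k = floor(k phi^2). *)
Definition wyA (k : nat) : nat := Z.to_nat (Int_part (INR k * phi)).

Lemma wyA_floor k : INR (wyA k) <= INR k * phi < INR (wyA k) + 1.
Proof.
have [lo hi] := base_Int_part (INR k * phi).
have kphi_ge0 : 0 <= INR k * phi by have := pos_INR k; have := phi_bounds; nra.
have -> : INR (wyA k) = IZR (Int_part (INR k * phi)).
  rewrite /wyA INR_IZR_INZ Z2Nat.id //.
  have : (-1 < Int_part (INR k * phi))%Z by apply: lt_IZR; lra.
  lia.
lra.
Qed.

Lemma wyA_eq k n : INR n <= INR k * phi < INR n + 1 -> wyA k = n.
Proof. by move/Int_part_eq; rewrite /wyA => ->; rewrite Nat2Z.id. Qed.

Lemma wyA_lt_mulphi {k} : (0 < k)%nat -> INR (wyA k) < INR k * phi.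
Proof. by move=> /(mulphi_neq_nat (wyA k)); have := wyA_floor k; lra. Qed.

Lemma Int_part_mulphi2 k : Int_part (INR k * phi ^ 2) = Z.of_nat (wyA k + k).
Proof.
apply: Int_part_eq; rewrite plus_INR.
have -> : INR k * phi ^ 2 = INR k * phi + INR k by rewrite /= Rmult_1_r phi_sq; ring.
by have := wyA_floor k; lra.
Qed.

Local Close Scope R_scope.

Lemma wyA0 : wyA 0 = 0.
Proof. by apply: wyA_eq => /=; lra. Qed.

Lemma wyA1 : wyA 1 = 1.
Proof. by apply: wyA_eq => /=; have := phi_bounds; lra. Qed.

Lemma wyA2 : wyA 2 = 3.
Proof. by apply: wyA_eq => /=; have := phi_bounds; lra. Qed.

Lemma wyA3 : wyA 3 = 4.
Proof. by apply: wyA_eq => /=; have := phi_bounds; lra. Qed.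

Lemma ltn_wyA_succ k : wyA k < wyA k.+1.
Proof.
apply: INR_ltn; have := wyA_floor k; have := wyA_floor k.+1.
by rewrite S_INR; have := phi_bounds; lra.
Qed.

Lemma leq_wyA : {mono wyA : i j / i <= j}.
Proof. exact: leq_mono (homo_ltn ltn_trans ltn_wyA_succ). Qed.

Lemma ltn_wyA : {mono wyA : i j / i < j}.
Proof. exact: leqW_mono leq_wyA. Qed.

Lemma wyA_inj : injective wyA.
Proof. exact: incn_inj leq_wyA. Qed.

Lemma wyA_ge k : k <= wyA k.
Proof.
rewrite -ltnS; apply: INR_ltn; rewrite S_INR.
by have := wyA_floor k; have := phi_bounds; have := pos_INR k; nra.
Qed.

Lemma wyA_gt {N} : 2 <= N -> N < wyA N.
Proof.
move/leq_INR => /= le2N; apply: INR_ltn.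
by have := wyA_floor N; have := phi_bounds; nra.
Qed.

Lemma wyA_pos {k} : 0 < k -> 0 < wyA k.
Proof. by have := wyA_ge k; lia. Qed.

Lemma wyA_lt_double {k} : 0 < k -> wyA k < 2 * k.
Proof.
move=> k_gt0; apply: INR_ltn; rewrite mult_INR /=.
have k_ge1 : (1 <= INR k)%R := leq_INR k_gt0.
have := wyA_lt_mulphi k_gt0; have := phi_bounds; nra.
Qed.

Lemma wyA_between i m : wyA i < m <= wyA i.+1 -> wyA m = m + i.
Proof.
(* Multiplying i phi < m < (i + 1) phi by phi - 1 = 1 / phi gives
   i < m (phi - 1) < i + 1. *)
case/andP=> /ltn_INR lo /leq_INR hi; apply: wyA_eq; rewrite plus_INR.
have := wyA_floor i; have := wyA_lt_mulphi (ltn0Sn i); rewrite S_INR => up_i1 [_ fl_i].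
have gt1 := phi_bounds.
have lo' : (INR i * phi * (phi - 1) < INR m * (phi - 1))%R.
  by apply: Rmult_lt_compat_r; lra.
have hi' : (INR m * (phi - 1) < (INR i + 1) * phi * (phi - 1))%R.
  by apply: Rmult_lt_compat_r; lra.
have phi_mul : (phi * (phi - 1) = 1)%R by have := phi_sq; lra.
rewrite Rmult_assoc phi_mul Rmult_1_r in lo'.
rewrite Rmult_assoc phi_mul Rmult_1_r in hi'.
lra.
Qed.

Lemma wyA_bracket {m} : 0 < m -> exists i, wyA i < m <= wyA i.+1.
Proof.
move=> m_gt0; have : exists i, m <= wyA i by exists m; apply: wyA_ge.
case/ex_minnP=> i le_m_Ai min_i.
have i_gt0 : 0 < i by case: i le_m_Ai {min_i}; rewrite ?wyA0; lia.
exists i.-1; rewrite prednK // le_m_Ai andbT ltnNge.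
by apply/negP => /min_i; lia.
Qed.

Definition in_wyA (n : nat) : bool := has (fun k => wyA k == n) (iota 1 n).

Lemma in_wyAP n : reflect (exists2 k, 0 < k & wyA k = n) (in_wyA n).
Proof.
apply: (iffP hasP) => [[k] | [k k_gt0 <-]].
  by rewrite mem_iota => /andP [k_gt0 _] /eqP; exists k.
by exists k; rewrite // mem_iota k_gt0 add1n ltnS wyA_ge.
Qed.

Lemma wyA_succE {n} : 0 < n -> wyA n.+1 = (wyA n).+1 + in_wyA n.
Proof.
move=> n_gt0; have [i /andP [lt_Ai_n le_n_Ai1]] := wyA_bracket n_gt0.
have An : wyA n = n + i by apply: wyA_between; rewrite lt_Ai_n.
move: le_n_Ai1; rewrite leq_eqVlt => /orP [/eqP eq_n | lt_n_Ai1]; last first.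
  have -> : in_wyA n = false.
    apply/in_wyAP => -[k _ Ak]; move: lt_Ai_n lt_n_Ai1.
    by rewrite -Ak !ltn_wyA; lia.
  by rewrite (@wyA_between i) ?An ?addn0 // ltnW // lt_n_Ai1 andbT.
have -> : in_wyA n by apply/in_wyAP; exists i.+1; rewrite ?eq_n.
rewrite (@wyA_between i.+1) ?An ?addn1 ?addnS //.
by rewrite -eq_n ltnSn /= eq_n ltn_wyA_succ.
Qed.

Lemma wyA_wyA {k} : 0 < k -> (wyA (wyA k)).+1 = wyA k + k.
Proof.
move=> k_gt0; rewrite (@wyA_between k.-1) ?prednK ?ltn_wyA ?leqnn //; lia.
Qed.

Lemma wyA_succ_wyA {k} : 0 < k -> wyA (wyA k).+1 = wyA k + k + 1.
Proof.
move=> k_gt0; rewrite wyA_succE ?wyA_pos // wyA_wyA //.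
by have -> : in_wyA (wyA k) by apply/in_wyAP; exists k.
Qed.

Lemma wyA_wyB {k} : 0 < k -> wyA (wyA k + k) = 2 * wyA k + k.
Proof.
move=> k_gt0; have AAk := wyA_wyA k_gt0; have ASAk := wyA_succ_wyA k_gt0.
by rewrite (@wyA_between (wyA k)) ?ASAk; lia.
Qed.

Lemma notin_wyA_wyB {k} : 0 < k -> ~~ in_wyA (wyA k + k).
Proof.
move=> k_gt0; apply/in_wyAP => -[l _ Al].
have AAk := wyA_wyA k_gt0; have ASAk := wyA_succ_wyA k_gt0.
have : wyA (wyA k) < wyA l < wyA (wyA k).+1 by rewrite Al; lia.
by rewrite !ltn_wyA; lia.
Qed.

Lemma wyB_of_notin_wyA {n} : 0 < n -> ~~ in_wyA n -> exists2 k, 0 < k & n = wyA k + k.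
Proof.
move=> n_gt0 notAn; have [i /andP [lt_Ai_n le_n_Ai1]] := wyA_bracket n_gt0.
have lt_n_Ai1 : n < wyA i.+1.
  rewrite ltn_neqAle le_n_Ai1 andbT; apply: contraNneq notAn => ->.
  by apply/in_wyAP; exists i.+1.
have i_gt0 : 0 < i by case: i lt_Ai_n lt_n_Ai1 {le_n_Ai1} => //; rewrite wyA0 wyA1; lia.
have := wyA_succE i_gt0; case: (in_wyAP i) => [[k k_gt0 Ak] | _] /=; last lia.
by exists k; rewrite // -(wyA_wyA k_gt0) Ak; lia.
Qed.

Lemma in_wyA_succ {n} : 0 < n -> ~~ in_wyA n -> in_wyA n.+1.
Proof.
move=> n_gt0 /(wyB_of_notin_wyA n_gt0) [k k_gt0 ->].
by apply/in_wyAP; exists (wyA k).+1; rewrite // wyA_succ_wyA // addn1.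
Qed.

Lemma wyB_inj : injective (fun k => wyA k + k).
Proof.
apply: incn_inj; apply: leq_mono => i j lt_ij.
by have := lt_ij; rewrite -ltn_wyA; lia.
Qed.

Lemma wyA_sub_homo : {homo (fun n => wyA n - n) : m n / m <= n}.
Proof.
apply: homo_leq => [// | m n p | n]; first exact: leq_trans.
by have := ltn_wyA_succ n; have := wyA_ge n; lia.
Qed.

Lemma wyA_sub_ge2 {N} : 4 <= N -> 2 <= wyA N - N.
Proof.
move=> N_ge4; have [i /andP [lt_Ai_N le_N_Ai1]] := @wyA_bracket N ltac:(lia).
rewrite (@wyA_between i) ?lt_Ai_N //.
by case: i {lt_Ai_N} le_N_Ai1 => [|[|i]]; rewrite ?wyA1 ?wyA2; lia.
Qed.

Fixpoint fib (n : nat) : nat :=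
  if n is (m.+1 as p).+1 then fib p + fib m else n.

Lemma fibSS n : fib n.+2 = fib n.+1 + fib n.
Proof. by []. Qed.

Lemma fib_pos {n} : 0 < n -> 0 < fib n.
Proof.
elim/ltn_ind: n => -[|[|n]] IH // _.
by rewrite fibSS; have := IH n.+1 (ltnSn _) isT; lia.
Qed.

Lemma fib_ge n : n <= fib n.+1.
Proof.
elim/ltn_ind: n => -[|[|n]] IH //.
by rewrite fibSS; have := IH n.+1 (ltnSn _); have := fib_pos (ltn0Sn n); lia.
Qed.

Lemma cassini_fib j :
  fib j.*2.+1 * fib j.*2.+1 = fib j.*2.+1 * fib j.*2 + fib j.*2 * fib j.*2 + 1 /\
  fib j.*2.+2 * fib j.*2.+2 + 1 = fib j.*2.+2 * fib j.*2.+1 + fib j.*2.+1 * fib j.*2.+1.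
Proof.
elim: j => [// | j [IH1 IH2]]; rewrite doubleS.
have f2 : fib j.*2.+2 = fib j.*2.+1 + fib j.*2 by [].
have f3 : fib j.*2.+3 = fib j.*2.+2 + fib j.*2.+1 by [].
have f4 : fib j.*2.+4 = fib j.*2.+3 + fib j.*2.+2 by [].
by rewrite f4 f3; split; nia.
Qed.

Lemma wyA_fib_even j : wyA (fib j.*2.+2) = (fib j.*2.+3).-1.
Proof.
have [cas _] := cassini_fib j.+1; rewrite doubleS in cas.
set a := fib j.*2.+2 in cas *; set b := fib j.*2.+3 in cas *.
have a_gt0 : 0 < a := fib_pos (ltn0Sn _).
have ge_ab : a <= b := leq_addr _ _.
apply: wyA_eq; rewrite -S_INR prednK; last by lia.
have lo : (b.-1 * b.-1 < b.-1 * a + a * a)%nat.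
  by case: b ge_ab cas => [|b'] /=; nia.
have hi : (b * a + a * a < b * b)%nat by lia.
by have := lt_mulphi_nat lo; have := gt_mulphi_nat hi; lra.
Qed.

Lemma wyA_fib_odd j : wyA (fib j.*2.+1) = fib j.*2.+2.
Proof.
have [_ cas] := cassini_fib j.
set k := fib j.*2.+1 in cas *; set a := fib j.*2.+2 in cas *.
have le_ka : k <= a := leq_addr _ _.
apply: wyA_eq; rewrite -S_INR.
have lo : (a * a < a * k + k * k)%nat by lia.
have hi : (a.+1 * k + k * k < a.+1 * a.+1)%nat by nia.
by have := lt_mulphi_nat lo; have := gt_mulphi_nat hi; lra.
Qed.

(* The odd-indexed Fibonacci numbers F(3), F(5), ... = 2, 5, 13, ...: the
   exceptional points of z. *)
Definition oddfib (n : nat) : bool := has (fun j => fib j.*2.+3 == n) (iota 0 n).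

Lemma oddfibP n : reflect (exists j, n = fib j.*2.+3) (oddfib n).
Proof.
apply: (iffP hasP) => [[j _ /eqP <-] | [j ->]]; first by exists j.
by exists j; rewrite // mem_iota; have := fib_ge j.*2.+2; lia.
Qed.

Lemma oddfib_notin_wyA n : oddfib n -> ~~ in_wyA n.
Proof.
case/oddfibP=> j ->; have -> : fib j.*2.+3 = wyA (fib j.*2.+1) + fib j.*2.+1.
  by rewrite wyA_fib_odd.
exact/notin_wyA_wyB/fib_pos.
Qed.

Lemma in_wyA_oddfib_pred n : oddfib n.+1 -> in_wyA n.
Proof.
case/oddfibP=> j def_n; apply/in_wyAP; exists (fib j.*2.+2); first exact: fib_pos.
by rewrite wyA_fib_even -def_n.
Qed.

Lemma oddfib_ge2 {n} : oddfib n -> 2 <= n.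
Proof.
case/oddfibP=> j ->; rewrite fibSS.
by have := fib_pos (ltn0Sn j.*2); have := fib_pos (ltn0Sn j.*2.+1); lia.
Qed.

Lemma wyA_oddfib_pred {n j} : n.+1 = fib j.*2.+3 -> wyA n + 1 = n + fib j.*2.+2.
Proof.
move=> def_n; have -> : n = wyA (fib j.*2.+2).
  by rewrite wyA_fib_even -def_n.
by rewrite addn1 wyA_wyA //; apply: fib_pos.
Qed.

Lemma fib_even_pred_wyB j : (fib j.*2.+4).-1 = wyA (fib j.*2.+2) + fib j.*2.+2.
Proof.
rewrite wyA_fib_even fibSS.
by have := fib_pos (ltn0Sn j.*2.+2); lia.
Qed.

Lemma in_wyA_oddfib_sub2 {n} : oddfib n.+2 -> 2 <= n -> in_wyA n.
Proof.
case/oddfibP=> -[|i] def_n n_ge2; first by move: def_n; rewrite /=; lia.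
rewrite doubleS in def_n.
set m := (fib i.*2.+4).-1.
have m_gt0 : 0 < m.
  by rewrite /m fib_even_pred_wyB; have := @wyA_pos (fib i.*2.+2) (fib_pos _); lia.
have m_wyB : ~~ in_wyA m by rewrite /m fib_even_pred_wyB; exact/notin_wyA_wyB/fib_pos.
have := wyA_succE m_gt0; rewrite (negbTE m_wyB) addn0.
have -> : m.+1 = fib (i.+1).*2.+2 by rewrite /m doubleS prednK //; exact: fib_pos.
rewrite wyA_fib_even doubleS -def_n /= => Am.
by apply/in_wyAP; exists m => //; lia.
Qed.

Lemma wyA_sub_oddfib_pred {y} : 2 <= y -> oddfib y.+1 ->
  exists i, wyA y - y = wyA (fib i.*2.+2) + fib i.*2.+2.
Proof.
move=> y_ge2 /oddfibP [[|i] def_y]; first by move: def_y; rewrite /=; lia.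
exists i; rewrite -fib_even_pred_wyB.
by have := wyA_oddfib_pred def_y; rewrite doubleS; lia.
Qed.

(* For n >= 2 the value z(n) is the residue zc_res n, forced modulo n + 1 by
   the divisibility condition, plus n + 1 exactly when zc_large n holds. *)
Definition zc_res (n : nat) : nat := wyA n - n - oddfib n.

Definition zc_large (n : nat) : bool := (in_wyA n && ~~ oddfib n.+1) || oddfib n.

Definition zc (n : nat) : nat :=
  if n <= 1 then n else zc_res n + (if zc_large n then n.+1 else 0).

Lemma zc_res_succ {N} : 2 <= N -> zc_res N.+1 = zc_res N + zc_large N.
Proof.
move=> N_ge2; rewrite /zc_res /zc_large wyA_succE ?(ltnW N_ge2) //.
have := wyA_gt N_ge2; case AN: (in_wyA N) => /=.
  have -> : oddfib N = false by apply: contraTF AN; apply: oddfib_notin_wyA.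
  by case: (oddfib N.+1); lia.
have -> : oddfib N.+1 = false by apply: contraFF AN; apply: in_wyA_oddfib_pred.
by case: (oddfib N); lia.
Qed.

Lemma zc_largeE {N} : 2 <= N -> zc_large N -> zc N = wyA N + 1 - oddfib N.
Proof.
move=> N_ge2 LN; rewrite /zc leqNgt N_ge2 LN /= /zc_res.
by have := wyA_gt N_ge2; case: (oddfib N); lia.
Qed.

Lemma zc_smallE {N} : 2 <= N -> ~~ zc_large N -> zc N = wyA N - N.
Proof.
move=> N_ge2 SN; rewrite /zc leqNgt N_ge2 (negbTE SN) /= /zc_res.
by move: SN; rewrite /zc_large negb_or => /andP [_ /negbTE ->]; lia.
Qed.

Lemma zc_in_wyA {N} : 2 <= N -> in_wyA N -> ~~ oddfib N.+1 -> zc N = wyA N + 1.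
Proof.
move=> N_ge2 AN FN; rewrite zc_largeE //; last by rewrite /zc_large AN FN.
by rewrite (contraTF (@oddfib_notin_wyA N)) ?AN ?subn0.
Qed.

Lemma zc_oddfib {N} : oddfib N -> zc N = wyA N.
Proof.
move=> FN; have LN : zc_large N by rewrite /zc_large FN orbT.
by rewrite zc_largeE ?(oddfib_ge2 FN) // FN addnK.
Qed.

Lemma zc_le {N} : 2 <= N -> zc N <= wyA N + 1.
Proof.
move=> N_ge2; case LN: (zc_large N).
  by rewrite zc_largeE //; lia.
by rewrite zc_smallE ?LN //; lia.
Qed.

Lemma zc_ge2 {N} : 2 <= N -> 2 <= zc N.
Proof.
move=> N_ge2; have := wyA_gt N_ge2; case LN: (zc_large N).
  by rewrite zc_largeE //; lia.
rewrite zc_smallE ?LN //; case: N N_ge2 LN => [|[|[|[|N]]]] // _ LN.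
- by rewrite /zc_large orbC in LN.
- have A3 : in_wyA 3 by apply/in_wyAP; exists 2; rewrite ?wyA2.
  by rewrite /zc_large A3 in LN.
- by move=> _; apply: wyA_sub_ge2.
Qed.

Lemma zc_large_lt {a b} : 2 <= a -> a < b -> zc_large a -> zc_large b -> zc a < zc b.
Proof.
move=> a_ge2 lt_ab La Lb; have b_ge2 := leq_trans a_ge2 (ltnW lt_ab).
have : wyA a.+1 <= wyA b by rewrite leq_wyA.
rewrite wyA_succE ?(ltnW a_ge2) // !zc_largeE //.
move: La; rewrite /zc_large.
by case: (in_wyA a); case: (oddfib a); case: (oddfib b) => //=; lia.
Qed.

Lemma zc_small_lt {a b} : 2 <= a -> a < b -> ~~ zc_large a -> ~~ zc_large b -> zc a < zc b.
Proof.
move=> a_ge2 lt_ab Sa Sb; have a_gt0 := ltnW a_ge2.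
rewrite !zc_smallE ?(leq_trans a_ge2 (ltnW lt_ab)) //.
have Aa_ge := wyA_ge a; have Aa1 := wyA_succE a_gt0.
case Aa: (in_wyA a) in Aa1.
  by have := wyA_sub_homo _ _ lt_ab; rewrite /= Aa1; lia.
have Aa1' : in_wyA a.+1 by apply: in_wyA_succ; rewrite ?Aa.
have Aa2 := wyA_succE (ltn0Sn a); rewrite Aa1' in Aa2.
move: lt_ab; rewrite leq_eqVlt => /orP [/eqP eq_b | lt_a1b].
  move: Sb; rewrite -eq_b /zc_large Aa1' /= => /norP [/negPn F2 _].
  by move: Aa; rewrite (in_wyA_oddfib_sub2 F2 a_ge2).
by have := wyA_sub_homo _ _ lt_a1b; rewrite /=; lia.
Qed.

Lemma zc_large_neq_small {x y} :
  2 <= x -> 2 <= y -> zc_large x -> ~~ zc_large y -> zc x != zc y.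
Proof.
move=> x_ge2 y_ge2 Lx Sy; rewrite (zc_smallE y_ge2 Sy); apply/eqP.
move: Sy; rewrite /zc_large negb_or negb_and negbK => /andP [/orP [Ay | Fy1] Fy].
  have [l l_gt0 def_y] := wyB_of_notin_wyA (ltnW y_ge2) Ay.
  have -> : wyA y - y = wyA l by rewrite {1}def_y wyA_wyB // def_y; lia.
  case/orP: Lx => [/andP [/in_wyAP [k k_gt0 def_x] Fx1] | Fx].
    rewrite zc_in_wyA //; last by apply/in_wyAP; exists k.
    rewrite -def_x addn1 wyA_wyA // => eq_Bk.
    by move: (notin_wyA_wyB k_gt0); rewrite eq_Bk; apply/negP/negPn/in_wyAP; exists l.
  rewrite zc_oddfib // => /wyA_inj eq_xl; move: Fy; rewrite def_y -eq_xl.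
  have /oddfibP [j ->] := Fx; rewrite (wyA_fib_odd j.+1) => /negP; apply.
  by apply/oddfibP; exists j.+1.
have [i ->] := wyA_sub_oddfib_pred y_ge2 Fy1.
have i_gt0 : 0 < fib i.*2.+2 := fib_pos (ltn0Sn _).
case/orP: Lx => [/andP [/in_wyAP [k k_gt0 def_x] Fx1] | Fx].
  rewrite zc_in_wyA //; last by apply/in_wyAP; exists k.
  rewrite -def_x addn1 wyA_wyA // => /wyB_inj def_k.
  move: Fx1; rewrite -def_x def_k wyA_fib_even prednK ?fib_pos // => /negP; apply.
  by apply/oddfibP; exists i.
rewrite zc_oddfib // => eq_x.
move: (notin_wyA_wyB i_gt0); rewrite -eq_x.
by apply/negP/negPn/in_wyAP; exists x; rewrite // ltnW.
Qed.

Lemma zc_neq {a b} : a < b -> zc a != zc b.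
Proof.
move=> lt_ab; have zc_le1 n : n <= 1 -> zc n = n by rewrite /zc => ->.
have [a_le1 | a_ge2] := leqP a 1.
  have [b_le1 | b_ge2] := leqP b 1; first by rewrite !zc_le1 // neq_ltn lt_ab.
  by rewrite (zc_le1 a a_le1); apply/eqP; have := zc_ge2 b_ge2; lia.
have b_ge2 := ltn_trans a_ge2 lt_ab.
case La: (zc_large a); case Lb: (zc_large b).
- by rewrite neq_ltn zc_large_lt.
- by rewrite zc_large_neq_small ?Lb.
- by rewrite eq_sym zc_large_neq_small ?La.
- by rewrite neq_ltn zc_small_lt ?La ?Lb.
Qed.

Lemma zc_inj : injective zc.
Proof.
move=> a b eq_zc; case: (ltngtP a b) => // lt_ab.
  by have := zc_neq lt_ab; rewrite eq_zc eqxx.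
by have := zc_neq lt_ab; rewrite eq_zc eqxx.
Qed.

Lemma zc_witness_wyA {P} : 2 <= P -> in_wyA P -> in_wyA P.+1 -> ~~ oddfib P.+2 ->
  exists2 m, m < P.+1 & zc m = wyA P.+1 - P.+1.
Proof.
move=> P_ge2 /in_wyAP [i i_gt0 def_P] /in_wyAP [i' i'_gt0 def_P1] F2.
have lt_ii' : i < i' by rewrite -ltn_wyA def_P def_P1.
have Ai1 : wyA i.+1 = (wyA i).+1.
  by have := leq_wyA i.+1 i'; rewrite lt_ii'; have := ltn_wyA_succ i; lia.
have Bi : ~~ in_wyA i by have := wyA_succE i_gt0; rewrite Ai1; case: (in_wyA i) => //=; lia.
have [k k_gt0 def_i] := wyB_of_notin_wyA i_gt0 Bi.
have AP1 : wyA P.+1 = P.+1 + i by apply: wyA_between; rewrite -def_P -Ai1 leqnn.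
have notF : ~~ oddfib (wyA k).+1.
  apply: contra F2 => /oddfibP [j def_Ak].
  have def_k : k = fib j.*2.+2 by apply: wyA_inj; rewrite wyA_fib_even -def_Ak.
  have def_i1 : i.+1 = fib (j.+1).*2.+2.
    by rewrite def_i def_k -fib_even_pred_wyB prednK // fib_pos.
  apply/oddfibP; exists j.+1.
  by rewrite -def_P -Ai1 def_i1 wyA_fib_even prednK // fib_pos.
have Ak_ge2 : 2 <= wyA k by case: (wyA k) notF (wyA_pos k_gt0) => [|[|a]].
exists (wyA k); first by have := wyA_ge i; rewrite def_P; lia.
rewrite zc_in_wyA // ?AP1; last by apply/in_wyAP; exists k.
by rewrite addn1 wyA_wyA // -def_i; lia.
Qed.

Lemma zc_witness_oddfib {P} : 3 <= P -> oddfib P ->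
  exists2 m, m < P.+1 & zc m = wyA P.+1 - P.+1.
Proof.
move=> P_ge3 FP; have /oddfibP [[|i] def_P] := FP; first by move: P_ge3; rewrite def_P.
have AP1 := wyA_succE (ltnW (ltnW P_ge3)); rewrite (negbTE (oddfib_notin_wyA _ FP)) in AP1.
have Fm : oddfib (fib i.*2.+3) by apply/oddfibP; exists i.
exists (fib i.*2.+3).
  by rewrite def_P doubleS !fibSS; have := fib_pos (ltn0Sn i.*2.+3); lia.
rewrite zc_oddfib // (wyA_fib_odd i.+1) AP1 def_P (wyA_fib_odd i.+2) !doubleS !fibSS.
lia.
Qed.

Lemma zc_witness {N} : 2 <= N -> zc_large N -> exists2 m, m < N & zc m = zc_res N.
Proof.
case: N => [|[|[|[|P]]]] // _ LN.
- by exists 0; rewrite // /zc_res wyA2.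
- by exists 1; rewrite // /zc_res wyA3.
case LP: (zc_large P.+3); last first.
  by exists P.+3; rewrite // zc_res_succ // LP /zc LP addn0.
have notFN : ~~ oddfib P.+4.
  apply/negP => FN; move: LP; rewrite /zc_large FN andbF /=.
  by move/oddfib_notin_wyA; rewrite in_wyA_oddfib_pred.
have -> : zc_res P.+4 = wyA P.+4 - P.+4 by rewrite /zc_res (negbTE notFN) subn0.
move: LN LP; rewrite /zc_large (negbTE notFN) orbF andbT => /andP [AN FN1] /orP [AP | FP].
  exact: zc_witness_wyA.
exact: zc_witness_oddfib.
Qed.

Lemma wyA_or_wyB {n} : 0 < n ->
  (exists2 k, 0 < k & n = wyA k) \/ (exists2 l, 0 < l & n = wyA l + l).
Proof.
move=> n_gt0; case An: (in_wyA n); first by left; case/in_wyAP: An => k ? <-; exists k.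
by right; apply: wyB_of_notin_wyA; rewrite ?An.
Qed.

(* For n >= 1 the value f(n) is the residue fc_res n, forced modulo n by the
   divisibility condition, plus n exactly when fc_large n holds. *)
Definition fc_res (n : nat) : nat := if n <= 1 then 0 else wyA n.-1 - n.-1 + 1.

Definition fc_large (n : nat) : bool := (n == 1) || in_wyA n.-1.

Definition fc (n : nat) : nat :=
  if n == 0 then 0 else fc_res n + (if fc_large n then n else 0).

Lemma fc_res_succ {N} : 0 < N -> fc_res N.+1 = fc_res N + fc_large N.
Proof.
rewrite /fc_res /fc_large; case: N => [|[|N]] //= _; first by rewrite wyA1.
by rewrite wyA_succE //; have := wyA_ge N.+1; lia.
Qed.

Lemma fc_wyA {k} : 0 < k -> fc (wyA k).+1 = wyA k + k + 1.
Proof.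
move=> k_gt0; have AAk := wyA_wyA k_gt0.
have Ak : in_wyA (wyA k) by apply/in_wyAP; exists k.
by rewrite /fc /fc_res /fc_large /= Ak orbT ltnNge wyA_pos //=; lia.
Qed.

Lemma fc_wyB {l} : 0 < l -> fc (wyA l + l).+1 = wyA l + 1.
Proof.
move=> l_gt0; have := wyA_wyB l_gt0; have := wyA_pos l_gt0.
rewrite /fc /fc_res /fc_large /= (negbTE (notin_wyA_wyB l_gt0)) orbF.
by case: ifP; case: ifP; lia.
Qed.

Lemma fc_involutive : involutive fc.
Proof.
case=> [|[|N]] //; have [[k k_gt0 ->] | [l l_gt0 ->]] := @wyA_or_wyB N.+1 isT.
  by rewrite fc_wyA // addn1 fc_wyB // addn1.
by rewrite fc_wyB // addn1 fc_wyA // addn1.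
Qed.

Lemma fc_inj : injective fc.
Proof. exact: inv_inj fc_involutive. Qed.

Lemma fc_res_lt {N} : 0 < N -> fc_res N < N.
Proof.
by rewrite /fc_res; case: N => [|[|N]] //= _; have := wyA_lt_double (ltn0Sn N); lia.
Qed.

Lemma fc_witness {N} : 0 < N -> fc_large N -> exists2 m, m < N & fc m = fc_res N.
Proof.
rewrite /fc_large; case: N => [|[|N]] // _; first by exists 0.
move=> /= /in_wyAP [k k_gt0 def_N]; have AAk := wyA_wyA k_gt0.
have -> : fc_res N.+2 = k by rewrite /fc_res /= -def_N; lia.
exists (fc k); last exact: fc_involutive.
have := wyA_ge k; case: k k_gt0 def_N {AAk} => [|[|k]] // _ def_N le_kAk.
have [[j j_gt0 def_k] | [l l_gt0 def_k]] := @wyA_or_wyB k.+1 isT; rewrite def_k.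
  by rewrite fc_wyA //; have := wyA_succ_wyA j_gt0; rewrite -def_k; lia.
by rewrite fc_wyB //; lia.
Qed.

Lemma least_belowP (P : pred nat) b v :
  v < b -> P v -> (forall m, m < v -> ~~ P m) -> least_below b P = v.
Proof.
move=> lt_vb Pv min_v; rewrite /least_below -(subnKC (ltnW lt_vb)) iotaD find_cat.
have -> : has P (iota 0 v) = false.
  by apply/negbTE/hasPn => m; rewrite mem_iota => /andP [_ /min_v].
have -> : b - v = (b - v).-1.+1 by rewrite prednK // subn_gt0.
by rewrite size_iota /= add0n Pv addn0.
Qed.

Lemma eq_residue {d q m t} : q <= d -> m < q + d.+1 -> d * q + m = t * d.+1 -> m = q.
Proof.
move=> le_qd lt_m eq_t; case: (ltngtP t q) => [lt_tq | lt_qt | eq_tq].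
- have : d.+1 * t <= d.+1 * q - d.+1 by nia.
  nia.
- have : d.+1 * q + d.+1 <= d.+1 * t by nia.
  nia.
- by move: eq_t; rewrite eq_tq; lia.
Qed.

(* q is the residue forced by the divisibility condition; g N may exceed it
   only when q is already taken. *)
Lemma least_below_greedy (g : nat -> nat) (N d q b : nat) (L : bool) :
  q <= d -> g N = q + (if L then d.+1 else 0) -> g N < b ->
  (forall i, i < N -> g i != g N) -> (L -> exists2 i, i < N & g i = q) ->
  least_below b (fun m => (m \notin map g (iota 0 N)) && (d.+1 %| d * q + m)) = g N.
Proof.
move=> le_qd gN lt_gNb g_new q_old; apply: least_belowP => //.
  apply/andP; split.
    apply/mapP => -[i]; rewrite mem_iota => /andP [_ lt_iN] eq_gi.
    by move: (g_new i lt_iN); rewrite eq_gi eqxx.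
  by apply/dvdnP; exists (q + L); rewrite gN; case: L {q_old gN lt_gNb}; nia.
move=> m lt_m; apply/negP => /andP [m_new /dvdnP [t eq_t]].
have m_q : m = q.
  by apply: (eq_residue le_qd _ eq_t); move: lt_m; rewrite gN; case: L {q_old gN}; lia.
case: L gN q_old => [gN | gN _]; last by move: lt_m; rewrite gN m_q addn0 ltnn.
case/(_ isT) => i lt_iN gi; move: m_new; rewrite m_q -gi.
by rewrite map_f // mem_iota.
Qed.

Lemma greedy_nth (next : nat -> seq nat -> nat) (sq : nat -> seq nat) (g : nat -> nat) :
  sq 0 = [:: g 0] -> (forall n, sq n.+1 = rcons (sq n) (next n.+1 (sq n))) ->
  (forall N, 0 < N -> next N (map g (iota 0 N)) = g N) ->
  forall n, nth 0 (sq n) n = g n.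
Proof.
move=> sq0 sqS nextE; have sqE n : sq n = map g (iota 0 n.+1).
  elim: n => [// | n IH]; rewrite sqS IH nextE //.
  by rewrite -(addn1 n.+1) iotaD map_cat /= cats1.
by move=> n; rewrite sqE (nth_map 0) ?size_iota // nth_iota.
Qed.

Lemma sumn_drop_map_iotaS (g : nat -> nat) k N : k <= N ->
  sumn (drop k (map g (iota 0 N.+1))) = sumn (drop k (map g (iota 0 N))) + g N.
Proof.
move=> le_kN; rewrite -addn1 iotaD map_cat /= cats1.
by rewrite drop_rcons ?size_map ?size_iota // sumn_rcons.
Qed.

Lemma sum_zc N : 2 <= N -> sumn (drop 2 (map zc (iota 0 N))) = N * zc_res N.
Proof.
elim: N => [// | N IH]; rewrite ltnS leq_eqVlt => /orP [/eqP <- | N_ge2].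
  by rewrite /zc_res wyA2.
rewrite sumn_drop_map_iotaS // IH // zc_res_succ // /zc leqNgt N_ge2 /=.
by case: (zc_large N) => /=; nia.
Qed.

Lemma sum_fc N : 0 < N -> sumn (behead (map fc (iota 0 N))) = N.-1 * fc_res N.
Proof.
rewrite -drop1; elim: N => [// | N IH]; rewrite ltnS leq_eqVlt => /orP [/eqP <- // | N_gt0].
rewrite sumn_drop_map_iotaS // IH // fc_res_succ // /fc (negbTE (lt0n_neq0 N_gt0)).
by case: (fc_large N) => /=; nia.
Qed.

Lemma next_z_zc N : 0 < N -> next_z N (map zc (iota 0 N)) = zc N.
Proof.
case: N => [|[|N]] // _; rewrite /next_z sum_zc //.
have lt_res : zc_res N.+2 < N.+2 by have := @wyA_lt_double N.+2 isT; rewrite /zc_res; lia.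
apply: least_below_greedy => //.
- exact: ltnW.
- by rewrite /zc /=; case: (zc_large N.+2); nia.
- by move=> i lt_i; apply: contraTneq lt_i => /zc_inj ->; rewrite ltnn.
- exact: zc_witness.
Qed.

Lemma next_f_fc N : 0 < N -> next_f N (map fc (iota 0 N)) = fc N.
Proof.
case: N => [// | N] _; rewrite /next_f sum_fc //.
have lt_res := @fc_res_lt N.+1 isT.
apply: least_below_greedy => //.
- by rewrite /fc /=; case: (fc_large N.+1); nia.
- by move=> i lt_i; apply: contraTneq lt_i => /fc_inj ->; rewrite ltnn.
- exact: fc_witness.
Qed.

Lemma zc_succ_wyB {l} : 0 < l -> zc (wyA l + l).+1 = 2 * wyA l + l + 2.
Proof.
move=> l_gt0; have Al_gt0 := wyA_pos l_gt0; have Bl := notin_wyA_wyB l_gt0.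
have notF : ~~ oddfib (wyA l + l).+2.
  by apply: contra Bl => /in_wyA_oddfib_sub2; apply; lia.
have An : in_wyA (wyA l + l).+1 by apply: in_wyA_succ => //; lia.
by rewrite zc_in_wyA // ?wyA_succE ?(negbTE Bl) ?wyA_wyB //; lia.
Qed.

Lemma zc_eq_fc_add n : zc n = fc n + n <-> n = 0 \/ exists2 k, 0 < k & n = wyA k + k + 1.
Proof.
case: n => [|[|N]]; first by split=> // _; left.
  by split=> // -[// | [k k_gt0]]; have := wyA_pos k_gt0; lia.
have [[k k_gt0 def_N] | [l l_gt0 def_N]] := @wyA_or_wyB N.+1 isT; rewrite def_N.
  rewrite fc_wyA //; split=> [| [// | [l l_gt0]]].
    by have := @zc_le (wyA k).+1; rewrite wyA_succ_wyA //; have := wyA_pos k_gt0; lia.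
  rewrite addn1 => /succn_inj eq_kl; move: (notin_wyA_wyB l_gt0).
  by rewrite -eq_kl => /negP []; apply/in_wyAP; exists k.
rewrite fc_wyB // zc_succ_wyB //; split=> [_ | _]; last lia.
by right; exists l; rewrite ?addn1.
Qed.

Theorem mainTheorem9 (n : nat) :
  Defs.z n = Defs.f n + n <->
  (n = 0 \/
   exists k : nat, (1 <= k)%nat /\
     Z.of_nat n = (Int_part (INR k * Defs.phi ^ 2) + 1)%Z).
Proof.
have -> : Defs.z n = zc n by apply: (greedy_nth next_z) => //; apply: next_z_zc.
have -> : Defs.f n = fc n by apply: (greedy_nth next_f) => //; apply: next_f_fc.
rewrite zc_eq_fc_add; split=> -[n0 | ]; try by left.
  by case=> k k_gt0 def_n; right; exists k; rewrite Int_part_mulphi2 def_n; lia.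
case=> k [k_gt0 def_n]; right; exists k => //.
by move: def_n; rewrite Int_part_mulphi2; lia.
Qed.
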